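(* Let $\mathfrak{q}$ be an $n\times n$ quantum parameter matrix over a field $k$ and $V$ a $k$-vector space with basis $v_1,\dots,v_n$. Let $\mathcal{P}$ be the partition of $[n]$ into the equivalence classes of $\mathcal{R}$. Then $$\mathrm{Aut}_{\mathrm{gr}}(S_{\mathfrak{q}}(V))\ \cong\ \prod_{D\in\mathcal{P}}\mathrm{Aut}_{\mathrm{gr}}\big(S_{\mathfrak{q}_{DD}}(V_D)\big).$$
   Context: An $n\times n$ quantum parameter matrix is a matrix $\mathfrak{q}=(q_{ij})$ over $k$ with $q_{ii}=1$ and $q_{ij}q_{ji}=1$ for all $i,j$. $S_{\mathfrak{q}}(V)$ is the $k$-algebra generated by $v_1,\dots,v_n$ with relations $v_jv_i=q_{ij}v_iv_j$, graded by $\deg v_i=1$; $\mathrm{Aut}_{\mathrm{gr}}$ denotes the group of degree-preserving algebra automorphisms. For $D\subseteq[n]$, $V_D=\mathrm{span}\{v_i:i\in D\}$ and $\mathfrak{q}_{DD}=(q_{ij})_{i,j\in D}$, a quantum parameter matrix defining $S_{\mathfrak{q}_{DD}}(V_D)$ with respect to $\{v_i:i\in D\}$. Define a relation on $[n]$ by $i\to\ell$ whenever there is a chain $i=i_0,i_1,\dots,i_p=\ell$ ($p\ge0$) such that for every $1\le s\le p$ either (1) row $i_{s-1}$ of $\mathfrak{q}$ is a permutation of row $i_s$ (as a sequence of entries), or (2) $q_{i_{s-1}i_s}\ne q_{i_ti_s}$ for some $0\le t<s$. $\mathcal{R}$ is the equivalence relation on $[n]$ generated by this relation. *)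

From HB Require Import structures.
From mathcomp Require Import all_boot all_order all_algebra.
From Stdlib Require Import Relations.
Set Implicit Arguments. Unset Strict Implicit. Unset Printing Implicit Defensive.
Import GRing.Theory.
Local Open Scope ring_scope.

Section QuantumAffine.
Variable k : fieldType.

Definition is_qpm (I : finType) (q : I -> I -> k) : Prop :=
  (forall i, q i i = 1) /\ (forall i j, q i j * q j i = 1).

Definition alg_hom (A B : algType k) (f : A -> B) : Prop :=
  [/\ forall x y, f (x + y) = f x + f y,
      forall (c : k) x, f (c *: x) = c *: f x,
      forall x y, f (x * y) = f x * f y
    & f 1 = 1].

Definition q_rels (I : finType) (q : I -> I -> k) (B : algType k) (b : I -> B) :
  Prop := forall i j, b j * b i = q i j *: (b i * b j).

(* (A, v) is S_q(V): the k-algebra generated by v_i (i in I) with the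
   relations v_j v_i = q_ij v_i v_j, given by its universal property *)
Definition is_Sq (I : finType) (q : I -> I -> k) (A : algType k) (v : I -> A) :
  Prop :=
  q_rels q v /\
  forall (B : algType k) (b : I -> B), q_rels q b ->
    exists f : A -> B,
      [/\ alg_hom f, (forall i, f (v i) = b i)
        & forall g : A -> B, alg_hom g -> (forall i, g (v i) = b i) -> g =1 f].

(* homogeneous component of degree d (grading deg v_i = 1):
   the span of the monomials v_{w 0} ... v_{w (d-1)} *)
Definition deg_part (I : finType) (A : algType k) (v : I -> A) (d : nat) (x : A)
  : Prop :=
  exists c : {ffun 'I_d -> I} -> k,
    x = \sum_(w : {ffun 'I_d -> I}) c w *: \prod_(j < d) v (w j).

Definition gr_aut (I : finType) (A : algType k) (v : I -> A) (f : A -> A) : Prop :=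
  [/\ alg_hom f, bijective f
    & forall d x, deg_part v d x -> deg_part v d (f x)].

Definition row_perm n (q : 'M[k]_n) (i j : 'I_n) : bool :=
  perm_eq [seq q i x | x <- enum 'I_n] [seq q j x | x <- enum 'I_n].

(* i -> l : chain i = i_0, ..., i_p = l (here s = i_0 :: rest) *)
Definition chain_ok n (q : 'M[k]_n) (i : 'I_n) (rest : seq 'I_n) : Prop :=
  let s := i :: rest in
  forall m : nat, (0 < m < size s)%N ->
    let a := nth i s m.-1 in let b := nth i s m in
    row_perm q a b \/ exists t : nat, (t < m)%N /\ q a b <> q (nth i s t) b.

Definition qarrow n (q : 'M[k]_n) (i l : 'I_n) : Prop :=
  exists rest : seq 'I_n, chain_ok q i rest /\ last i rest = l.

Definition qR n (q : 'M[k]_n) : relation 'I_n :=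
  clos_refl_sym_trans 'I_n (qarrow q).

Definition is_class n (q : 'M[k]_n) (D : {set 'I_n}) : Prop :=
  exists i, forall j, j \in D <-> qR q i j.

Definition qsub n (q : 'M[k]_n) (D : {set 'I_n})
  : {i : 'I_n | i \in D} -> {i : 'I_n | i \in D} -> k :=
  fun i j => q (val i) (val j).

End QuantumAffine.
Arguments qsub [k n] q D.

From Pilot Require Import Defs.
From HB Require Import structures.
From mathcomp Require Import all_boot all_order all_algebra.
From mathcomp Require Import perm boolp ring.
From Stdlib Require Import Relations.
Set Implicit Arguments. Unset Strict Implicit. Unset Printing Implicit Defensive.
Import GRing.Theory.
Local Open Scope ring_scope.

(* A graded automorphism f of S_q(V) is given on generators by an invertible
   matrix P, f v_i = sum_a P_ia v_a.  Since the only relations in degree two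
   are v_b v_a = q_ab v_a v_b, comparing the two sides of
   f v_j * f v_i = q_ij f v_i * f v_j shows that P_ia <> 0 and P_jb <> 0 force
   q_ab = q_ij.  As det P <> 0 there is a permutation s with P_i(s i) <> 0 for
   all i, so P_ia <> 0 makes row i of q a permutation of row a, whence i -> a:
   P is block diagonal for the classes of R.  Thus f restricts to each
   S_q_DD(V_D), through the inclusion and the projection killing the other
   generators.  Conversely automorphisms of the blocks glue together, because
   by condition (2) of the chains q is constant on D x D' for distinct classes,
   so generators from D and D' commute up to a single scalar. *)

Section AlgHom.
Variable k : fieldType.
Implicit Types B C E : algType k.

Section Basic.
Variables (B C : algType k) (f : B -> C).
Hypothesis hf : alg_hom f.

Lemma alg_homD : {morph f : x y / x + y}. Proof. by case: hf. Qed.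
Lemma alg_homZ c : {morph f : x / c *: x}.
Proof. by case: hf => _ hZ _ _ x; apply: hZ. Qed.
Lemma alg_homM : {morph f : x y / x * y}. Proof. by case: hf. Qed.
Lemma alg_hom1 : f 1 = 1. Proof. by case: hf. Qed.
Lemma alg_hom0 : f 0 = 0.
Proof. by rewrite -(scale0r (0 : B)) alg_homZ scale0r. Qed.

Lemma alg_hom_sum (I : Type) (r : seq I) (P : pred I) (F : I -> B) :
  f (\sum_(i <- r | P i) F i) = \sum_(i <- r | P i) f (F i).
Proof. exact: (big_morph f alg_homD alg_hom0). Qed.

Lemma alg_hom_prod (I : Type) (r : seq I) (P : pred I) (F : I -> B) :
  f (\prod_(i <- r | P i) F i) = \prod_(i <- r | P i) f (F i).
Proof. exact: (big_morph f alg_homM alg_hom1). Qed.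

Lemma alg_hom_lin (I : Type) (r : seq I) (c : I -> k) (F : I -> B) :
  f (\sum_(i <- r) c i *: F i) = \sum_(i <- r) c i *: f (F i).
Proof. by rewrite alg_hom_sum; apply: eq_bigr => i _; rewrite alg_homZ. Qed.

End Basic.

Lemma alg_hom_id B : alg_hom (@id B). Proof. by []. Qed.

Lemma alg_hom_comp B C E (f : C -> E) (g : B -> C) :
  alg_hom f -> alg_hom g -> alg_hom (f \o g).
Proof.
move=> hf hg; split=> [x y|c x|x y|] /=.
- by rewrite !(alg_homD hg, alg_homD hf).
- by rewrite !(alg_homZ hg, alg_homZ hf).
- by rewrite !(alg_homM hg, alg_homM hf).
by rewrite (alg_hom1 hg) (alg_hom1 hf).
Qed.

Lemma alg_hom_can B C (f : B -> C) (g : C -> B) :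
  alg_hom f -> cancel f g -> cancel g f -> alg_hom g.
Proof.
move=> hf fK gK; split=> [x y|c x|x y|].
- by rewrite -{1}(gK x) -{1}(gK y) -(alg_homD hf) fK.
- by rewrite -{1}(gK x) -(alg_homZ hf) fK.
- by rewrite -{1}(gK x) -{1}(gK y) -(alg_homM hf) fK.
by rewrite -(alg_hom1 hf) fK.
Qed.

Lemma q_rels_comp (J : finType) (qq : J -> J -> k) B C (f : B -> C) (b : J -> B) :
  alg_hom f -> q_rels qq b -> q_rels qq (f \o b).
Proof. by move=> hf hb i j /=; rewrite -!(alg_homM hf) hb alg_homZ. Qed.

End AlgHom.

Section Span.
Variables (k : fieldType) (J : finType) (B : algType k) (w : J -> B).

Definition in_span (x : B) : Prop := exists c : J -> k, x = \sum_i c i *: w i.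

Lemma in_span0 : in_span 0.
Proof. by exists (fun=> 0); rewrite big1 // => i _; rewrite scale0r. Qed.

Lemma in_spanD x y : in_span x -> in_span y -> in_span (x + y).
Proof.
case=> [c ->] [c' ->]; exists (fun i => c i + c' i).
by rewrite -big_split; apply: eq_bigr => i _; rewrite scalerDl.
Qed.

Lemma in_spanZ a x : in_span x -> in_span (a *: x).
Proof.
case=> [c ->]; exists (fun i => a * c i).
by rewrite scaler_sumr; apply: eq_bigr => i _; rewrite scalerA.
Qed.

Lemma in_span_sum (I : Type) (r : seq I) (c : I -> k) (F : I -> B) :
  (forall i, in_span (F i)) -> in_span (\sum_(i <- r) c i *: F i).
Proof.
move=> hF; elim/big_rec: _ => [|i x _ hx]; first exact: in_span0.
by apply: in_spanD hx; apply: in_spanZ.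
Qed.

Lemma gen_sum_delta a : w a = \sum_e (e == a)%:R *: w e.
Proof.
rewrite (bigD1 a) //= eqxx scale1r big1 ?addr0 // => e /negbTE ->.
by rewrite scale0r.
Qed.

Lemma in_span_gen a : in_span (w a).
Proof. by exists (fun e => (e == a)%:R); apply: gen_sum_delta. Qed.

Lemma sum_scale_span (I : finType) (x : I -> k) (y : I -> J -> k) :
  \sum_i x i *: \sum_a y i a *: w a = \sum_a (\sum_i x i * y i a) *: w a.
Proof.
under eq_bigr do rewrite scaler_sumr; rewrite exchange_big /=.
by apply: eq_bigr => a _; rewrite scaler_suml; apply: eq_bigr => i _; rewrite scalerA.
Qed.

Lemma coord_ex x : exists c : J -> k, in_span x -> x = \sum_i c i *: w i.
Proof.
by case: (EM (in_span x)) => [[c ->]|nx]; [exists c | exists (fun=> 0)].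
Qed.

Definition coord (x : B) : J -> k := projT1 (cid (coord_ex x)).

Lemma coordK x : in_span x -> x = \sum_i coord x i *: w i.
Proof. exact: projT2 (cid (coord_ex x)). Qed.

End Span.

Section Degree.
Variables (k : fieldType) (J : finType) (B : algType k) (w : J -> B).

Lemma deg_part_sum d (I : Type) (r : seq I) (P : pred I) (F : I -> B) :
  (forall i, P i -> deg_part w d (F i)) -> deg_part w d (\sum_(i <- r | P i) F i).
Proof.
apply: big_ind => [|x y [c ->] [c' ->]].
  by exists (fun=> 0); rewrite big1 // => i _; rewrite scale0r.
exists (fun i => c i + c' i).
by rewrite -big_split; apply: eq_bigr => i _; rewrite scalerDl.
Qed.

Lemma deg_partZ d a x : deg_part w d x -> deg_part w d (a *: x).
Proof.
case=> [c ->]; exists (fun i => a * c i).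
by rewrite scaler_sumr; apply: eq_bigr => i _; rewrite scalerA.
Qed.

Lemma deg_part_monomial d (u : {ffun 'I_d -> J}) :
  deg_part w d (\prod_(j < d) w (u j)).
Proof.
exists (fun u' => (u' == u)%:R).
rewrite (bigD1 u) //= eqxx scale1r [X in _ + X]big1 ?addr0 //.
by move=> u' /negbTE ->; rewrite scale0r.
Qed.

Lemma deg_part1 x : deg_part w 1 x <-> in_span w x.
Proof.
split=> [[c ->]|[c ->]].
  by apply: in_span_sum => u; rewrite big_ord1; apply: in_span_gen.
pose mono (a : J) : {ffun 'I_1 -> J} := [ffun=> a].
have mono_bij : {on predT, bijective mono}.
  exists (fun u : {ffun 'I_1 -> J} => u ord0) => [a _|u _]; first by rewrite ffunE.
  by apply/ffunP => i; rewrite ffunE (ord1 i).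
exists (fun u : {ffun 'I_1 -> J} => c (u ord0)).
by rewrite (reindex mono mono_bij); apply: eq_bigr => a _; rewrite big_ord1 ffunE.
Qed.

End Degree.

Lemma deg_part_hom (k : fieldType) (J J' : finType) (B C : algType k)
    (w : J -> B) (w' : J' -> C) (f : B -> C) :
  alg_hom f -> (forall j, in_span w' (f (w j))) ->
  forall d x, deg_part w d x -> deg_part w' d (f x).
Proof.
move=> hf /fin_all_exists [e he] d x [c ->].
rewrite alg_hom_lin //; apply: deg_part_sum => u _; apply: deg_partZ.
rewrite alg_hom_prod // (eq_bigr (fun j => \sum_b e (u j) b *: w' b)); last first.
  by move=> j _; rewrite he.
rewrite bigA_distr_bigA; apply: deg_part_sum => u' _.
by rewrite scaler_prod; apply/deg_partZ/deg_part_monomial.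
Qed.

Section GradedHom.
Variables (k : fieldType) (J : finType) (B : algType k) (w : J -> B).

Definition gr_hom (f : B -> B) : Prop := alg_hom f /\ forall i, in_span w (f (w i)).

Lemma gr_aut_hom f : gr_aut w f -> gr_hom f.
Proof.
case=> hf _ hdeg; split=> // i.
by apply/deg_part1/hdeg/deg_part1; apply: in_span_gen.
Qed.

Lemma gr_aut_inj f : gr_aut w f -> injective f.
Proof. by case=> _ /bij_inj. Qed.

Lemma gr_hom_aut f : gr_hom f -> bijective f -> gr_aut w f.
Proof. by case=> hf hspan fbij; split=> //; apply: deg_part_hom. Qed.

End GradedHom.

Lemma skew_nilpotent_pair (k : fieldType) (c : k) : exists X Y : 'M[k]_4,
  [/\ X * X = 0, Y * Y = 0, Y * X = c *: (X * Y) & X * Y != 0].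
Proof.
pose E (i j : 'I_4) : 'M[k]_4 := delta_mx i j.
have EM i j i' j' : E i j * E i' j' = E i j' *+ (j == i').
  by rewrite -mulmxE mul_delta_mx_cond.
exists (E 1 0 + E 3 2), (E 2 0 + c *: E 3 1).
rewrite !(mulrDl, mulrDr) -!scalerAl -!scalerAr !EM /= ?mulr0n ?mulr1n.
rewrite !(scaler0, addr0, add0r); split=> //.
by apply/negP => /eqP/matrixP/(_ 3 0)/eqP; rewrite !mxE oner_eq0.
Qed.

Section KroneckerSums.
Variables (R : comPzSemiRingType) (I : finType).

Lemma sum_mul_delta (F : I -> R) a : \sum_x F x * (x == a)%:R = F a.
Proof.
rewrite (bigD1 a) //= eqxx mulr1 big1 ?addr0 // => x /negbTE ->.
by rewrite mulr0.
Qed.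

Lemma sum2_mul_delta (F : I -> I -> R) a b :
  \sum_x \sum_y F x y * ((x == a)%:R * (y == b)%:R) = F a b.
Proof.
rewrite -[RHS](sum_mul_delta (F^~ b) a); apply: eq_bigr => x _.
rewrite -(sum_mul_delta (F x) b) mulr_suml.
by apply: eq_bigr => y _; rewrite mulrA mulrAC.
Qed.

End KroneckerSums.

Lemma span_mul (k : fieldType) (J : finType) (B : algType k) (w : J -> B)
    (x y : J -> k) :
  (\sum_a x a *: w a) * (\sum_c y c *: w c) =
  \sum_a \sum_c (x a * y c) *: (w a * w c).
Proof.
rewrite mulr_suml; apply: eq_bigr => a _; rewrite mulr_sumr; apply: eq_bigr => c _.
by rewrite -scalerAl -scalerAr scalerA.
Qed.

Section QuantumAffineSpace.
Variables (k : fieldType) (J : finType) (qq : J -> J -> k) (B : algType k).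
Variable w : J -> B.
Hypotheses (Hq : is_qpm qq) (HS : is_Sq qq w).

Lemma Sq_hom_exists (C : algType k) (b : J -> C) :
  q_rels qq b -> exists f : B -> C, alg_hom f /\ forall i, f (w i) = b i.
Proof. by move=> /HS.2 [f [hf fb _]]; exists f. Qed.

Lemma Sq_hom_ext (C : algType k) (f g : B -> C) :
  alg_hom f -> alg_hom g -> (forall i, f (w i) = g (w i)) -> f =1 g.
Proof.
move=> hf hg fg; have [h [_ _ hU]] := HS.2 C (f \o w) (q_rels_comp hf HS.1).
by move=> x; rewrite (hU f hf (fun=> erefl)) (hU g hg (fun i => esym (fg i))).
Qed.

Lemma Sq_free (c : J -> k) : \sum_i c i *: w i = 0 -> forall i, c i = 0.
Proof.
(* All products vanish in this representation, which separates coefficients. *)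
pose b a : 'M[k]_#|J|.+1 := delta_mx 0 (lift 0 (enum_rank a)).
have hb : q_rels qq b.
  move=> i j; rewrite -!mulmxE !mul_delta_mx_cond.
  by rewrite ![lift _ _ == 0]eq_sym !(negbTE (neq_lift _ _)) scaler0.
have [f [hf fb]] := Sq_hom_exists hb.
move=> /(congr1 f); rewrite alg_hom_lin // alg_hom0 // => /matrixP cb0 i.
move: (cb0 0 (lift 0 (enum_rank i))); rewrite summxE mxE => <-.
rewrite -[LHS](sum_mul_delta c i); apply: eq_bigr => a _.
by rewrite fb !mxE eqxx (inj_eq lift_inj) (inj_eq enum_rank_inj) eq_sym.
Qed.

Lemma coord_lin (c : J -> k) : coord w (\sum_i c i *: w i) =1 c.
Proof.
move=> i; apply/eqP; rewrite -subr_eq0; apply/eqP; move: i; apply: Sq_free.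
rewrite (eq_bigr (fun a => coord w (\sum_i c i *: w i) a *: w a - c a *: w a)).
  by rewrite sumrB -coordK ?subrr //; exists c.
by move=> a _; rewrite scalerBl.
Qed.

Lemma coord0 : coord w 0 =1 fun=> 0.
Proof.
have -> : (0 : B) = \sum_i (fun=> 0) i *: w i.
  by rewrite big1 // => i _; rewrite scale0r.
exact: coord_lin.
Qed.

Lemma Sq_hom_deg2 (C : algType k) (f : B -> C) (al : J -> J -> k) : alg_hom f ->
  f (\sum_c \sum_e al c e *: (w c * w e)) =
  \sum_c \sum_e al c e *: (f (w c) * f (w e)).
Proof.
move=> hf; rewrite alg_hom_sum //; apply: eq_bigr => c _.
by rewrite alg_hom_lin //; apply: eq_bigr => e _; rewrite alg_homM.
Qed.

Section Degree2.
Variable al : J -> J -> k.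
Hypothesis al0 : \sum_c \sum_e al c e *: (w c * w e) = 0.

Lemma Sq_deg2_diag c : al c c = 0.
Proof.
pose b i : 'M[k]_1 := (i == c)%:R *: 1.
have bM i j : b i * b j = ((i == c)%:R * (j == c)%:R) *: 1.
  by rewrite -scalerAl -scalerAr scalerA mulr1.
have hb : q_rels qq b.
  move=> i j; rewrite !bM scalerA; congr (_ *: _).
  by case: (eqVneq i c) => [->|_]; case: (eqVneq j c) => [->|_];
    rewrite ?Hq.1 /= ?(mulr0, mul0r, mulr1).
have [f [hf fb]] := Sq_hom_exists hb.
have /eqP := congr1 f al0; rewrite Sq_hom_deg2 // alg_hom0 //.
under eq_bigr do under eq_bigr do rewrite !fb bM scalerA.
under eq_bigr do rewrite -scaler_suml.
by rewrite -scaler_suml sum2_mul_delta scaler_eq0 oner_eq0 orbF => /eqP.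
Qed.

Lemma Sq_deg2_offdiag c e : c != e -> al c e + qq c e * al e c = 0.
Proof.
move=> ce; have [X [Y [XX YY YX XY0]]] := skew_nilpotent_pair (qq c e).
(* v_c |-> X, v_e |-> Y, other generators |-> 0: the element is sent to
   (al c e + qq c e * al e c) *: (X * Y). *)
pose b i := (i == c)%:R *: X + (i == e)%:R *: Y.
have bM i j : b i * b j =
    ((i == c)%:R * (j == e)%:R + qq c e * ((i == e)%:R * (j == c)%:R)) *: (X * Y).
  rewrite mulrDl !mulrDr -!scalerAl -!scalerAr XX YY YX !scalerA !scaler0.
  by rewrite addr0 add0r scalerDl [_ * qq c e]mulrC.
have hb : q_rels qq b.
  move=> i j; rewrite !bM scalerA; congr (_ *: _).
  case: (eqVneq i c) => [->|_];
    rewrite ?eqxx ?(negbTE ce) /= ?(mulr0, mul0r, mulr1, mul1r, addr0, add0r).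
    by case: (eqVneq j e) => [->|_]; rewrite ?(mulr0, mul0r, mulr1, mul1r).
  case: (eqVneq i e) => [->|_]; rewrite ?(mulr0, mul0r, mulr1, mul1r, addr0, add0r) //.
  by case: (eqVneq j c) => [->|_]; rewrite ?(mulr0, mul0r, mulr1, mul1r) ?Hq.2.
have [f [hf fb]] := Sq_hom_exists hb.
have /eqP := congr1 f al0; rewrite Sq_hom_deg2 // alg_hom0 //.
under eq_bigr do under eq_bigr do rewrite !fb bM scalerA.
under eq_bigr do rewrite -scaler_suml.
rewrite -scaler_suml scaler_eq0 (negbTE XY0) orbF => /eqP <-.
rewrite -[X in X + _](sum2_mul_delta al) -(sum2_mul_delta al e c).
rewrite mulr_sumr -big_split; apply: eq_bigr => x _.
rewrite mulr_sumr -big_split; apply: eq_bigr => y _ /=.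
by rewrite mulrDr [al x y * (qq c e * _)]mulrCA.
Qed.

End Degree2.

Lemma Sq_span_mul_eq0 x y :
  in_span w x -> in_span w y -> y != 0 -> x * y = 0 -> x = 0.
Proof.
move=> /coordK -> /coordK ->; set g := coord w x; set d := coord w y => y0.
rewrite span_mul => al0.
have [diag off] := (Sq_deg2_diag al0, Sq_deg2_offdiag al0).
have [b db] : exists b, d b != 0.
  case: (pickP (fun b => d b != 0)) => [b db | d0]; first by exists b.
  by case/eqP: y0; rewrite big1 // => i _; rewrite (eqP (negbFE (d0 i))) scale0r.
have gb : g b = 0 by move/eqP: (diag b); rewrite mulf_eq0 (negbTE db) orbF => /eqP.
have g0 a : g a = 0.
  have [-> //|ab] := eqVneq a b.
  move/eqP: (off a b ab); rewrite gb mul0r mulr0 addr0 mulf_eq0 (negbTE db) orbF.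
  by move/eqP.
by rewrite big1 // => a _; rewrite g0 scale0r.
Qed.

Lemma Sq_span_skew x y a b : in_span w x -> in_span w y -> coord w y b != 0 ->
  y * w a = x * y -> x = qq a b *: w a.
Proof.
move=> /coordK ex /coordK ey; set t := coord w x in ex *; set d := coord w y in ey *.
move=> db yx; pose al c e := d c * (e == a)%:R - t c * d e.
have al0 : \sum_c \sum_e al c e *: (w c * w e) = 0.
  rewrite -[RHS](subrr (y * w a)) {2}yx {1}(gen_sum_delta w a) ex ey !span_mul.
  rewrite -sumrB.
  apply: eq_bigr => c _; rewrite -sumrB.
  by apply: eq_bigr => e _; rewrite scalerBl.
have [diag off] := (Sq_deg2_diag al0, Sq_deg2_offdiag al0).
have t_out c : c != a -> t c = 0.
  move=> ca; move/eqP: (diag c); rewrite /al (negbTE ca) mulr0 sub0r oppr_eq0.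
  rewrite mulf_eq0 => /orP[/eqP // | /eqP dc0].
  have cb : c != b by apply: contraNneq db => <-; rewrite dc0.
  move/eqP: (off c b cb); rewrite /al dc0 (negbTE ca).
  rewrite !(mul0r, mulr0, subr0, sub0r, oppr0, addr0).
  by rewrite oppr_eq0 mulf_eq0 (negbTE db) orbF => /eqP.
have ta : t a = qq a b.
  have [eab|ab] := eqVneq a b.
    subst b; move/eqP: (diag a); rewrite /al Hq.1 eqxx mulr1 -{1}[d a]mul1r -mulrBl.
    by rewrite mulf_eq0 (negbTE db) orbF subr_eq0 => /eqP.
  have ba : b != a by rewrite eq_sym.
  move/eqP: (off b a ba); rewrite /al eqxx (negbTE ba) (t_out b ba).
  rewrite !(mulr0, mul0r, subr0, sub0r) mulr1 mulrN mulrA -{1}[d b]mul1r -mulrBl.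
  rewrite mulf_eq0 (negbTE db) orbF subr_eq0 => /eqP e.
  by rewrite -[t a]mul1r -(Hq.2 a b) -mulrA -e mulr1.
rewrite ex (bigD1 a) //= ta big1 ?addr0 // => c ca.
by rewrite t_out // scale0r.
Qed.

Section GradedEndomorphism.
Variable f : B -> B.
Hypotheses (hf : gr_hom w f) (finj : injective f).

Definition gr_mx : 'M[k]_#|J| :=
  \matrix_(i, a) coord w (f (w (enum_val i))) (enum_val a).

Lemma gr_hom_expand i : f (w i) = \sum_a coord w (f (w i)) a *: w a.
Proof. exact/coordK/hf.2. Qed.

Lemma gr_mx_unit : gr_mx \in unitmx.
Proof.
rewrite unitmxE unitfE; apply/negP => /det0P [u u0 uM0].
pose x := \sum_i u 0 (enum_rank i) *: w i.
have fx0 : f x = 0.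
  rewrite (alg_hom_lin hf.1); under eq_bigr do rewrite gr_hom_expand.
  rewrite sum_scale_span big1 // => a _.
  suff -> : \sum_i u 0 (enum_rank i) * coord w (f (w i)) a = 0 by rewrite scale0r.
  move/matrixP/(_ 0 (enum_rank a)): uM0; rewrite !mxE => uMa.
  rewrite -[RHS]uMa (reindex _ (onW_bij _ (@enum_rank_bij J))) /=.
  by apply: eq_bigr => i _; rewrite mxE !enum_rankK.
have /Sq_free u_0 : x = 0 by apply: finj; rewrite fx0 (alg_hom0 hf.1).
by case/eqP: u0; apply/rowP => i; rewrite mxE -[i]enum_valK u_0.
Qed.

Lemma gr_gen_span a : in_span (f \o w) (w a).
Proof.
exists (fun i => invmx gr_mx (enum_rank a) (enum_rank i)) => /=.
under eq_bigr do rewrite gr_hom_expand.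
rewrite sum_scale_span {1}(gen_sum_delta w a); apply: eq_bigr => c _; congr (_ *: _).
move/matrixP/(_ (enum_rank a) (enum_rank c)): (mulVmx gr_mx_unit).
rewrite !mxE (inj_eq enum_rank_inj) eq_sym => <-.
rewrite (reindex _ (onW_bij _ (@enum_rank_bij J))) /=.
by apply: eq_bigr => i _; rewrite mxE !enum_rankK.
Qed.

Lemma gr_coord_perm : exists s : {perm J}, forall i, coord w (f (w i)) (s i) != 0.
Proof.
have := gr_mx_unit; rewrite unitmxE unitfE.
case: (pickP (fun s : 'S_#|J| => [forall i, gr_mx i (s i) != 0])) => [s hs _|none].
  have s_inj : injective (enum_val \o s \o enum_rank).
    by move=> a b /enum_val_inj /perm_inj /enum_rank_inj.
  exists (perm s_inj) => a; rewrite permE /=.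
  by move/forallP/(_ (enum_rank a)): hs; rewrite mxE enum_rankK.
rewrite /determinant big1 ?eqxx // => s _.
have /forallPn [i] := negbT (none s); rewrite negbK => /eqP gi.
by rewrite (bigD1 i) //= gi mul0r mulr0.
Qed.

Lemma gr_coord_q i j a b : coord w (f (w i)) a != 0 -> coord w (f (w j)) b != 0 ->
  qq a b = qq i j.
Proof.
move=> ia jb; set y := f (w j).
have fM : q_rels qq (f \o w) := q_rels_comp hf.1 HS.1.
have y0 : y != 0 by apply: contraNneq jb => y_0; rewrite -/y y_0 coord0.
(* As the matrix of f is invertible, w a' is a combination of the f (w i). *)
have skew a' : y * w a' = qq a' b *: (w a' * y).
  have [N eN] := gr_gen_span a'.
  pose x := \sum_i (N i * qq i j) *: f (w i).
  have yx : y * w a' = x * y.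
    rewrite eN mulr_sumr mulr_suml; apply: eq_bigr => i' _ /=.
    by rewrite -scalerAr fM scalerA scalerAl.
  have x_span : in_span w x by apply: in_span_sum => i'; apply: hf.2.
  by rewrite yx (Sq_span_skew x_span (hf.2 j) jb yx) -scalerAl.
have e1 : y * f (w i) = (\sum_c (coord w (f (w i)) c * qq c b) *: w c) * y.
  rewrite {1}gr_hom_expand mulr_sumr mulr_suml; apply: eq_bigr => c _.
  by rewrite -scalerAr skew scalerA scalerAl.
have e2 : y * f (w i) = (\sum_c (qq i j * coord w (f (w i)) c) *: w c) * y.
  rewrite [LHS]fM /= {1}gr_hom_expand scalerAl scaler_sumr; congr (_ * _).
  by apply: eq_bigr => c _; rewrite scalerA.
pose d c := coord w (f (w i)) c * qq c b - qq i j * coord w (f (w i)) c.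
have : (\sum_c d c *: w c) * y = 0.
  under eq_bigr do rewrite scalerBl.
  by rewrite sumrB mulrBl -e1 -e2 subrr.
move/(Sq_span_mul_eq0 (ex_intro _ d erefl) (hf.2 j) y0)/Sq_free/(_ a)/eqP.
by rewrite /d [qq i j * _]mulrC -mulrBr mulf_eq0 (negbTE ia) subr_eq0 => /eqP.
Qed.

End GradedEndomorphism.

Lemma gr_hom_can f g : gr_hom w f -> cancel f g -> cancel g f -> gr_hom w g.
Proof.
move=> hf fK gK; have hg := alg_hom_can hf.1 fK gK; split=> // a.
have [N ->] := gr_gen_span hf (can_inj fK) a.
by rewrite (alg_hom_lin hg); apply: in_span_sum => i /=; rewrite fK; apply: in_span_gen.
Qed.

End QuantumAffineSpace.

Section ClassRelation.
Variables (k : fieldType) (n : nat) (q : 'M[k]_n).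

Lemma perm_row_qarrow (s : {perm 'I_n}) i a :
  (forall j, q a (s j) = q i j) -> qarrow q i a.
Proof.
move=> hs; exists [:: a]; split=> // row m /andP[m0 m1]; left.
have -> : m = 1%N by case: m m0 m1 => [|[|]].
rewrite /row /Defs.row_perm /=.
have -> : [seq q i j | j <- enum 'I_n] = [seq q a j | j <- [seq s j | j <- enum 'I_n]].
  by rewrite -[RHS]map_comp; apply: eq_map => j /=; rewrite hs.
apply/perm_map/uniq_perm => [||j].
- by rewrite (map_inj_uniq (@perm_inj _ s)) enum_uniq.
- exact: enum_uniq.
by rewrite mem_enum -[j](permKV s) map_f ?mem_enum.
Qed.

Lemma chain_ok_rcons i rest b : chain_ok q i rest ->
    (exists t, (t <= size rest)%N /\ q (last i rest) b <> q (nth i (i :: rest) t) b) ->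
  chain_ok q i (rcons rest b).
Proof.
move=> ok [t [t_le ne]] s m /andP[m0]; rewrite /s /= size_rcons ltnS => m_le.
have nthE p : (p <= size rest)%N -> nth i (i :: rcons rest b) p = nth i (i :: rest) p.
  by move=> p_le; rewrite -rcons_cons nth_rcons /= ltnS p_le.
case: m m0 m_le => [//|m] _ m_le /=; rewrite nthE //.
case: (ltnP m (size rest)) => [lt_m | le_m].
  rewrite nth_rcons lt_m; case: (ok m.+1); rewrite /= ?ltnS ?lt_m //.
    by left.
  by move=> [p [p_lt hp]]; right; exists p; rewrite nthE // (leq_trans (ltnW p_lt)).
have -> : m = size rest by apply/eqP; rewrite eqn_leq le_m -ltnS m_le.
rewrite nth_rcons ltnn eqxx -[size rest]/((size (i :: rest)).-1) nth_last /=.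
by right; exists t; rewrite nthE.
Qed.

Lemma qarrow_const i l b : qarrow q i l -> ~ qR q i b -> q i b = q l b.
Proof.
case=> rest [ok <-] nib; apply: contrapT => ne; apply/nib/rst_step.
exists (rcons rest b); rewrite last_rcons; split=> //.
by apply: chain_ok_rcons ok _; exists 0%N; split=> // /esym.
Qed.

Lemma qR_const i l : qR q i l -> forall b, ~ qR q i b -> q i b = q l b.
Proof.
elim=> {i l} [i l il b|//|i l il IH b nib|i l m il IH1 lm IH2 b nib].
- exact: qarrow_const.
- rewrite (IH b) // => lb; exact/nib/(rst_trans _ _ _ _ _ (rst_sym _ _ _ _ il) lb).
- rewrite (IH1 b nib) (IH2 b) // => lb; exact/nib/(rst_trans _ _ _ _ _ il lb).
Qed.

Hypothesis Hq : is_qpm (fun i j => q i j).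

Lemma qR_cross i j a b : ~ qR q i j -> qR q i a -> qR q j b -> q a b = q i j.
Proof.
move=> nij ia jb.
have nib : ~ qR q i b by move=> ib; apply/nij/(rst_trans _ _ _ _ _ ib)/rst_sym.
have nji : ~ qR q j i by move=> ji; apply/nij/rst_sym.
have /= := Hq.2 i b; have /= := Hq.2 i j.
rewrite (qR_const ia nib) (qR_const jb nji) => e1 e2.
by rewrite -[q a b]mulr1 -e1 mulrCA e2 mulr1.
Qed.

Definition qclass (i : 'I_n) : {set 'I_n} := [set j | `[< qR q i j >]].

Lemma qclassP i j : reflect (qR q i j) (j \in qclass i).
Proof. by rewrite inE; apply: asboolP. Qed.

Lemma qclass_refl i : i \in qclass i.
Proof. exact/qclassP/rst_refl. Qed.

Lemma qclass_is_class i : is_class q (qclass i).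
Proof. by exists i => j; split=> /qclassP. Qed.

Lemma is_classE D i : is_class q D -> i \in D -> D = qclass i.
Proof.
case=> i0 hD /hD i0i; apply/setP => j; apply/idP/qclassP => [/hD i0j | ij].
  exact: rst_trans (rst_sym _ _ _ _ i0i) i0j.
exact/hD/(rst_trans _ _ _ _ _ i0i ij).
Qed.

End ClassRelation.

Lemma sum_skew_comm (k : fieldType) (B : algType k) (S T : finType)
    (fs : S -> B) (ft : T -> B) (lam : k) (c : S -> k) (c' : T -> k) :
  (forall s t, ft t * fs s = lam *: (fs s * ft t)) ->
  (\sum_t c' t *: ft t) * (\sum_s c s *: fs s) =
  lam *: ((\sum_s c s *: fs s) * (\sum_t c' t *: ft t)).
Proof.
move=> comm; rewrite !mulr_suml scaler_sumr.
under eq_bigr do rewrite mulr_sumr.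
rewrite exchange_big /=; apply: eq_bigr => s _.
rewrite mulr_sumr scaler_sumr; apply: eq_bigr => t _.
rewrite -!scalerAl -!scalerAr comm !scalerA; congr (_ *: _); ring.
Qed.

Section BlockDecomposition.
Variables (k : fieldType) (n : nat) (q : 'M[k]_n) (A : algType k) (v : 'I_n -> A).
Variable AD : {set 'I_n} -> algType k.
Variable vD : forall D : {set 'I_n}, {i : 'I_n | i \in D} -> AD D.
Arguments vD : clear implicits.
Implicit Types (D : {set 'I_n}) (i j a : 'I_n) (f g : A -> A).
Hypotheses (Hq : is_qpm (fun i j => q i j)) (HS : is_Sq (fun i j => q i j) v).

Lemma gr_coord_qR f i a :
  gr_hom v f -> injective f -> coord v (f (v i)) a != 0 -> qR q i a.
Proof.
move=> hf finj ia; have [s hs] := gr_coord_perm HS hf finj.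
apply/rst_step/(@perm_row_qarrow _ _ _ s) => j.
by have := gr_coord_q Hq HS hf finj ia (hs j).
Qed.

Definition block_gen D (a : 'I_n) : AD D := oapp (vD D) 0 (insub a).

Lemma block_genE D a (aD : a \in D) : block_gen D a = vD D (exist _ a aD).
Proof. by rewrite /block_gen insubT. Qed.

Lemma block_gen_out D a : a \notin D -> block_gen D a = 0.
Proof. by move=> aD; rewrite /block_gen insubN. Qed.

Lemma block_gen_rels D :
  is_Sq (qsub q D) (vD D) -> q_rels (fun i j => q i j) (block_gen D).
Proof.
move=> HD i j; case: (boolP (i \in D)) => iD; last first.
  by rewrite (block_gen_out iD) mulr0 mul0r scaler0.
case: (boolP (j \in D)) => jD; last by rewrite (block_gen_out jD) mulr0 mul0r scaler0.
by rewrite !block_genE; apply: HD.1 (exist _ i iD) (exist _ j jD).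
Qed.

(* The hypotheses sit inside the existential so that [incl D] and [proj D]
   below are defined for every D, independently of any proof. *)
Lemma block_maps_ex D : exists p : (AD D -> A) * (A -> AD D),
  is_Sq (fun i j => q i j) v -> is_Sq (qsub q D) (vD D) ->
  [/\ alg_hom p.1, forall x, p.1 (vD D x) = v (val x),
      alg_hom p.2 & forall a, p.2 (v a) = block_gen D a].
Proof.
case: (EM (is_Sq (fun i j => q i j) v /\ is_Sq (qsub q D) (vD D))) => [[HS' HD]|nS].
  have [inc [inc_hom inc_v]] := Sq_hom_exists HD (fun x y => HS'.1 (val x) (val y)).
  have [pr [pr_hom pr_v]] := Sq_hom_exists HS' (block_gen_rels HD).
  by exists (inc, pr).
by exists (fun=> 0, fun=> 0) => HS' HD; case: nS.
Qed.

Definition incl D : AD D -> A := (projT1 (cid (block_maps_ex D))).1.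
Arguments incl : clear implicits.
Definition proj D : A -> AD D := (projT1 (cid (block_maps_ex D))).2.
Arguments proj : clear implicits.
Definition restr D f : AD D -> AD D := proj D \o f \o incl D.
Arguments restr : clear implicits.

Section OneBlock.
Variable D : {set 'I_n}.
Hypothesis HD : is_Sq (qsub q D) (vD D).

Let block_maps := projT2 (cid (block_maps_ex D)) HS HD.

Lemma incl_hom : alg_hom (incl D). Proof. by case: block_maps. Qed.
Lemma incl_vD x : incl D (vD D x) = v (val x).
Proof. by case: block_maps => _ h _ _; apply: h. Qed.
Lemma proj_hom : alg_hom (proj D). Proof. by case: block_maps. Qed.
Lemma proj_v a : proj D (v a) = block_gen D a.
Proof. by case: block_maps => _ _ _ h; apply: h. Qed.

Lemma incl_block_gen a : a \in D -> incl D (block_gen D a) = v a.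
Proof. by move=> aD; rewrite block_genE incl_vD. Qed.

Lemma proj_inclK : cancel (incl D) (proj D).
Proof.
apply: (Sq_hom_ext HD (alg_hom_comp proj_hom incl_hom) (alg_hom_id _)) => -[a aD] /=.
by rewrite incl_vD proj_v block_genE.
Qed.

Lemma restr_hom f : alg_hom f -> alg_hom (restr D f).
Proof. by move=> hf; apply: alg_hom_comp (alg_hom_comp proj_hom hf) incl_hom. Qed.

Lemma restr_gen_span f x : gr_hom v f -> in_span (vD D) (restr D f (vD D x)).
Proof.
move=> hf; rewrite /restr /= incl_vD (gr_hom_expand hf) (alg_hom_lin proj_hom).
apply: in_span_sum => a; rewrite proj_v /block_gen.
by case: insub => [y|]; [apply: in_span_gen | apply: in_span0].
Qed.

Hypothesis HcD : is_class q D.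

Lemma incl_proj_gr f i : gr_hom v f -> injective f -> i \in D ->
  incl D (proj D (f (v i))) = f (v i).
Proof.
move=> hf finj iD.
rewrite (gr_hom_expand hf) (alg_hom_lin proj_hom) (alg_hom_lin incl_hom).
apply: eq_bigr => a _; case: (boolP (a \in D)) => aD.
  by rewrite proj_v incl_block_gen.
suff -> : coord v (f (v i)) a = 0 by rewrite !scale0r.
apply: contraNeq aD => /(gr_coord_qR hf finj) ia.
by rewrite (is_classE HcD iD); apply/qclassP.
Qed.

Lemma restr_comp f g : gr_hom v f -> gr_hom v g -> injective g ->
  restr D (f \o g) =1 restr D f \o restr D g.
Proof.
move=> hf hg ginj.
apply: (Sq_hom_ext HD (restr_hom (alg_hom_comp hf.1 hg.1))).
  exact: alg_hom_comp (restr_hom hf.1) (restr_hom hg.1).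
by move=> -[i iD]; rewrite /restr /= !incl_vD incl_proj_gr.
Qed.

Lemma restr_gr_aut f : gr_aut v f -> gr_aut (vD D) (restr D f).
Proof.
move=> fa; have hf := gr_aut_hom fa; case: fa => _ [g fK gK] _.
have hg := gr_hom_can HS hf fK gK.
apply: gr_hom_aut.
  by split=> [|x]; [apply: restr_hom hf.1 | apply: restr_gen_span hf].
exists (restr D g) => x.
  by rewrite -[LHS](restr_comp hg hf (can_inj fK)) /restr /= fK proj_inclK.
by rewrite -[LHS](restr_comp hf hg (can_inj gK)) /restr /= gK proj_inclK.
Qed.

End OneBlock.

Hypothesis HSD : forall D, is_class q D -> is_Sq (qsub q D) (vD D).

Lemma restr_inj f g : gr_aut v f -> gr_aut v g ->
  (forall D, is_class q D -> restr D f =1 restr D g) -> f =1 g.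
Proof.
move=> fa ga fg; have [hf finj] := (gr_aut_hom fa, gr_aut_inj fa).
have [hg ginj] := (gr_aut_hom ga, gr_aut_inj ga).
apply: (Sq_hom_ext HS hf.1 hg.1) => i.
have [hD iD] := (qclass_is_class q i, qclass_refl q i).
rewrite -(incl_proj_gr (HSD hD) hD hf finj iD) -(incl_proj_gr (HSD hD) hD hg ginj iD).
by move: (fg _ hD (vD _ (exist _ i iD))); rewrite /restr /= (incl_vD (HSD hD)) => ->.
Qed.

Section Glue.
Variable h : forall D, is_class q D -> AD D -> AD D.
Arguments h : clear implicits.
Hypothesis h_gr : forall D (hD : is_class q D), gr_hom (vD D) (h D hD).

Let glue_gen i : A :=
  incl (qclass q i) (h _ (qclass_is_class q i) (block_gen (qclass q i) i)).

Lemma glue_genE D (hD : is_class q D) i :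
  i \in D -> glue_gen i = incl D (h D hD (block_gen D i)).
Proof.
move=> iD; have eD := is_classE hD iD; subst D.
by rewrite /glue_gen (Prop_irrelevance hD (qclass_is_class q i)).
Qed.

Lemma glue_gen_span i :
  exists c : {a | a \in qclass q i} -> k, glue_gen i = \sum_x c x *: v (val x).
Proof.
have [c ec] := (h_gr (qclass_is_class q i)).2 (exist _ i (qclass_refl q i)).
exists c; rewrite /glue_gen (block_genE (qclass_refl q i)) ec.
rewrite (alg_hom_lin (incl_hom (HSD (qclass_is_class q i)))).
by apply: eq_bigr => x _; rewrite (incl_vD (HSD (qclass_is_class q i))).
Qed.

Lemma glue_rels : q_rels (fun i j => q i j) glue_gen.
Proof.
move=> i j /=; case: (EM (qR q i j)) => [ij | nij].
  have [hD iD] := (qclass_is_class q i, qclass_refl q i).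
  have jD : j \in qclass q i by apply/qclassP.
  rewrite (glue_genE hD iD) (glue_genE hD jD).
  have hinc := alg_hom_comp (incl_hom (HSD hD)) (h_gr hD).1.
  exact: q_rels_comp hinc (block_gen_rels (HSD hD)) i j.
have [c ->] := glue_gen_span i; have [c' ->] := glue_gen_span j.
apply: sum_skew_comm => -[a /qclassP ia] -[b /qclassP jb] /=.
by rewrite HS.1 (qR_cross Hq nij ia jb).
Qed.

Lemma glue_hom : exists f, gr_hom v f /\
  forall D (hD : is_class q D) x, f (incl D x) = incl D (h D hD x).
Proof.
have [f [hf fv]] := Sq_hom_exists HS glue_rels.
exists f; split.
  split=> // i; rewrite fv; have [c ->] := glue_gen_span i.
  by apply: in_span_sum => x; apply: in_span_gen.
move=> D hD; have inc_hom := incl_hom (HSD hD).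
apply: (Sq_hom_ext (HSD hD) (alg_hom_comp hf inc_hom)).
  exact: alg_hom_comp inc_hom (h_gr hD).1.
by move=> -[a aD] /=; rewrite (incl_vD (HSD hD)) fv (glue_genE hD aD) (block_genE aD).
Qed.

End Glue.

Lemma intertwined_can f1 f2 (h1 h2 : forall D, is_class q D -> AD D -> AD D) :
  alg_hom f1 -> alg_hom f2 ->
  (forall D hD x, f1 (incl D x) = incl D (h1 D hD x)) ->
  (forall D hD x, f2 (incl D x) = incl D (h2 D hD x)) ->
  (forall D hD, cancel (h2 D hD) (h1 D hD)) -> cancel f2 f1.
Proof.
move=> hf1 hf2 f1_incl f2_incl hK x.
apply: (Sq_hom_ext HS (alg_hom_comp hf1 hf2) (alg_hom_id _)) => i /=.
have [hD iD] := (qclass_is_class q i, qclass_refl q i).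
by rewrite -(incl_vD (HSD hD) (exist _ i iD)) (f2_incl _ hD) (f1_incl _ hD) hK.
Qed.

Lemma restr_surj (h : forall D, is_class q D -> AD D -> AD D) :
  (forall D (hD : is_class q D), gr_aut (vD D) (h D hD)) ->
  exists f, gr_aut v f /\ forall D (hD : is_class q D), restr D f =1 h D hD.
Proof.
move=> h_aut.
have inv_ex D (hD : is_class q D) :
    exists h', cancel (h D hD) h' /\ cancel h' (h D hD).
  by case: (h_aut D hD) => _ [h' ? ?] _; exists h'.
pose h' D hD := projT1 (cid (inv_ex D hD)).
have h'K D hD : cancel (h D hD) (h' D hD) /\ cancel (h' D hD) (h D hD).
  exact: projT2 (cid (inv_ex D hD)).
have h_gr D hD := gr_aut_hom (h_aut D hD).
have h'_gr D hD := gr_hom_can (HSD hD) (h_gr D hD) (h'K D hD).1 (h'K D hD).2.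
have [f [f_gr f_incl]] := glue_hom h_gr.
have [g [g_gr g_incl]] := glue_hom h'_gr.
exists f; split.
  apply: (gr_hom_aut f_gr); exists g.
    exact: intertwined_can g_gr.1 f_gr.1 g_incl f_incl (fun D hD => (h'K D hD).1).
  exact: intertwined_can f_gr.1 g_gr.1 f_incl g_incl (fun D hD => (h'K D hD).2).
by move=> D hD x; rewrite /restr /= f_incl (proj_inclK (HSD hD)).
Qed.

End BlockDecomposition.

Arguments restr {k n} q {A} v {AD} vD D f.

Theorem theorem4p2 (k : fieldType) (n : nat) (q : 'M[k]_n)
  (A : algType k) (v : 'I_n -> A)
  (AD : {set 'I_n} -> algType k)
  (vD : forall D : {set 'I_n}, {i : 'I_n | i \in D} -> AD D) :
  is_qpm (fun i j => q i j) ->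
  is_Sq (fun i j => q i j) v ->
  (forall D, is_class q D -> is_Sq (qsub q D) (vD D)) ->
  exists Phi : (A -> A) -> forall D : {set 'I_n}, is_class q D -> AD D -> AD D,
    [/\ (forall f, gr_aut v f -> forall D (hD : is_class q D), gr_aut (vD D) (Phi f D hD)),
        (forall f g, gr_aut v f -> gr_aut v g ->
           (forall D (hD : is_class q D), Phi f D hD =1 Phi g D hD) -> f =1 g),
        (forall h : forall D : {set 'I_n}, is_class q D -> AD D -> AD D,
           (forall D (hD : is_class q D), gr_aut (vD D) (h D hD)) ->
           exists f, gr_aut v f /\
             forall D (hD : is_class q D), Phi f D hD =1 h D hD)
      & (forall f g, gr_aut v f -> gr_aut v g ->
           forall D (hD : is_class q D),
             Phi (f \o g) D hD =1 (Phi f D hD \o Phi g D hD))].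
Proof.
move=> Hq HS HSD; exists (fun f D _ => restr q v vD D f); split.
- by move=> f fa D hD; have := restr_gr_aut Hq HS (HSD D hD) hD fa.
- move=> f g fa ga fg; have := restr_inj Hq HS HSD fa ga; apply=> D hD; exact: fg.
- by move=> h h_aut; have := restr_surj Hq HS HSD h_aut.
move=> f g fa ga D hD; have [hf hg] := (gr_aut_hom fa, gr_aut_hom ga).
by have := restr_comp Hq HS (HSD D hD) hD hf hg (gr_aut_inj ga).
Qed.
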